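(* For every odd integer $k\ge 3$, the graph $F_k$ is geodetic.
   Context: All graphs are finite, simple and undirected; a graph is geodetic if between any two vertices there is at most one shortest path. For odd $k\ge 3$, $F_k$ is constructed as follows: take two disjoint cycles of length $k$ with vertices $u_1,\dots,u_k$ and $v_1,\dots,v_k$ respectively (in cyclic order), and add: a vertex $b$ adjacent to $u_{(k+1)/2}$ and $v_{(k+1)/2}$; a vertex $s_1$ adjacent to $u_1$ and a vertex $s_2$ adjacent to $u_k$; a vertex $t_1$ adjacent to $v_1$ and a vertex $t_2$ adjacent to $v_k$; and four paths of length three (each with two new internal vertices) joining $s_1$ to $t_1$, $s_1$ to $t_2$, $s_2$ to $t_1$, and $s_2$ to $t_2$. *)

From mathcomp Require Import all_boot.
Set Implicit Arguments. Unset Strict Implicit. Unset Printing Implicit Defensive.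

(* A walk from [x] is a sequence [p] of the subsequent vertices, with
   [path e x p]; it ends at [last x p] and has length [size p].
   A shortest path from x to y is a walk from x to y whose length is minimal
   among all walks from x to y (such a walk automatically repeats no vertex). *)
Definition is_walk (T : finType) (e : rel T) (x y : T) (p : seq T) : bool :=
  path e x p && (last x p == y).

Definition is_shortest_path (T : finType) (e : rel T) (x y : T) (p : seq T) :=
  is_walk e x y p /\ forall q, is_walk e x y q -> size p <= size q.

Definition geodetic (T : finType) (e : rel T) : Prop :=
  forall x y : T, forall p q : seq T,
    is_shortest_path e x y p -> is_shortest_path e x y q -> p = q.

(* Vertex set {0, ..., 2k+12}, encoded as follows:
   u_{i+1} = i           (0 <= i < k)
   v_{i+1} = k + i       (0 <= i < k)
   b = 2k, s1 = 2k+1, s2 = 2k+2, t1 = 2k+3, t2 = 2k+4,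
   internal path vertices w_j = 2k+5+j (0 <= j < 8):
     s1 - w0 - w1 - t1,  s1 - w2 - w3 - t2,
     s2 - w4 - w5 - t1,  s2 - w6 - w7 - t2. *)
Section Fk.
Variable k : nat.
Definition Fu (i : nat) : nat := i.
Definition Fv (i : nat) : nat := k + i.
Definition Fb : nat := 2 * k.
Definition Fs1 : nat := 2 * k + 1.
Definition Fs2 : nat := 2 * k + 2.
Definition Ft1 : nat := 2 * k + 3.
Definition Ft2 : nat := 2 * k + 4.
Definition Fw (j : nat) : nat := 2 * k + 5 + j.

(* index (0-based) of u_{(k+1)/2} / v_{(k+1)/2} *)
Definition Fmid : nat := ((k + 1) %/ 2).-1.

Definition Fdedge (a c : nat) : bool :=
  [|| (a < k) && (c == Fu (a.+1 %% k)),
      (k <= a < 2 * k) && (c == Fv ((a - k).+1 %% k)),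
      (a == Fb) && (c == Fu Fmid),
      (a == Fb) && (c == Fv Fmid),
      (a == Fs1) && (c == Fu 0),
      (a == Fs2) && (c == Fu k.-1),
      (a == Ft1) && (c == Fv 0),
      (a == Ft2) && (c == Fv k.-1),
      (a == Fs1) && (c == Fw 0), (a == Fw 0) && (c == Fw 1), (a == Fw 1) && (c == Ft1),
      (a == Fs1) && (c == Fw 2), (a == Fw 2) && (c == Fw 3), (a == Fw 3) && (c == Ft2),
      (a == Fs2) && (c == Fw 4), (a == Fw 4) && (c == Fw 5), (a == Fw 5) && (c == Ft1)
    |
      [|| (a == Fs2) && (c == Fw 6), (a == Fw 6) && (c == Fw 7) | (a == Fw 7) && (c == Ft2)]].

Definition Fk_vertex : finType := 'I_(2 * k + 13).

Definition Fk_adj : rel Fk_vertex :=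
  fun x y => Fdedge (val x) (val y) || Fdedge (val y) (val x).
End Fk.
Arguments Fk_adj : clear implicits.
Arguments Fdedge : clear implicits.

From mathcomp Require Import all_boot zify.
Set Implicit Arguments. Unset Strict Implicit. Unset Printing Implicit Defensive.

(* If d vanishes at x, grows by at most one along each edge, and every vertex
   z <> x has exactly one neighbour y with d y + 1 = d z, then d is the
   distance from x and a shortest path from x to z must end with the edge from
   that unique parent; by induction it is unique.  For k = 2m + 1 such
   labellings are written down explicitly.  The reflections of the two cycles
   and the exchange of the u- and v-sides generate a group of automorphisms of
   F_k whose orbits are represented by u_{(k+1)/2}, the vertices u_i, b, s_1
   and the neighbour of s_1 on the path towards t_1, so it suffices to give the
   distances from these five vertices in closed form and to check the
   labelling conditions by linear arithmetic. *)

Section GeodesicLabelling.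
Variables (T : finType) (e : rel T).

Definition geodesic_labelling (x : T) (d : T -> nat) : Prop :=
  [/\ d x = 0,
      forall y z, e y z -> d z <= (d y).+1,
      forall z, z != x -> exists2 y, e y z & (d y).+1 = d z
    & forall y y' z, e y z -> e y' z ->
        (d y).+1 = d z -> (d y').+1 = d z -> y = y'].

Variables (x : T) (d : T -> nat).
Hypothesis dP : geodesic_labelling x d.

Lemma labelling_le_size p : path e x p -> d (last x p) <= size p.
Proof.
case: dP => d0 d_edge _ _; elim/last_ind: p => [|p z IHp]; first by rewrite d0.
rewrite rcons_path last_rcons size_rcons => /andP[/IHp le_p e_z].
exact: leq_trans (d_edge _ _ e_z) _.
Qed.

Lemma walk_of_labelling y : exists2 p, is_walk e x y p & size p = d y.
Proof.
case: dP => d0 _ d_parent _.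
suff walk_n n z : d z = n -> exists2 p, is_walk e x z p & size p = n by apply: walk_n.
elim: n z => [|n IHn] {}y dy.
  case: (eqVneq y x) => [->|/d_parent[z _]]; last by rewrite dy.
  by exists [::]; rewrite /is_walk ?eqxx.
have /d_parent[z e_zy dz] : y != x by apply: contra_eq_neq dy => ->; rewrite d0.
have [|p /andP[p_path /eqP p_last] size_p] := IHn z; first by move: dz; rewrite dy => -[].
exists (rcons p y); last by rewrite size_rcons size_p.
by rewrite /is_walk rcons_path p_path p_last e_zy last_rcons eqxx.
Qed.

Lemma size_shortest_path y p : is_shortest_path e x y p -> size p = d y.
Proof.
case=> /andP[p_path /eqP p_last] p_min; have [q q_walk size_q] := walk_of_labelling y.
by apply/eqP; rewrite eqn_leq -size_q p_min //= size_q -{1}p_last labelling_le_size.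
Qed.

Lemma tight_walk_unique p q : path e x p -> path e x q -> last x p = last x q ->
  size p = d (last x p) -> size q = d (last x q) -> p = q.
Proof.
case: dP => d0 d_edge _ d_unique.
elim/last_ind: p q => [|p y IHp] q.
  by case/lastP: q => // q z _ _ <- _; rewrite size_rcons d0.
case/lastP: q => [|q z]; first by move=> _ _ -> ; rewrite d0 size_rcons.
rewrite !rcons_path !last_rcons !size_rcons => /andP[p_path e_p] /andP[q_path e_q] yz.
subst z; have tight r : path e x r -> e (last x r) y -> (size r).+1 = d y ->
    (d (last x r)).+1 = d y /\ size r = d (last x r).
  move=> r_path e_r size_r; have := labelling_le_size r_path; have := d_edge _ _ e_r; lia.
move=> /(tight _ p_path e_p)[dp sp] /(tight _ q_path e_q)[dq sq].
by rewrite (IHp q) // (d_unique _ _ _ e_p e_q).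
Qed.

End GeodesicLabelling.

Lemma geodetic_of_labellings (T : finType) (e : rel T) :
  (forall x, exists d, geodesic_labelling e x d) -> geodetic e.
Proof.
move=> labelled x y p q p_short q_short; have [d dP] := labelled x.
case: (p_short) (q_short) => /andP[p_path /eqP p_last] _ [/andP[q_path /eqP q_last] _].
apply: (tight_walk_unique dP) => //; first by rewrite p_last q_last.
  by rewrite p_last (size_shortest_path dP p_short).
by rewrite q_last (size_shortest_path dP q_short).
Qed.

Section LabellingPullback.
Variables (T : finType) (e : rel T) (U : Type) (adj : U -> U -> Prop) (f : T -> U).
Hypotheses (f_inj : injective f)
  (f_edge : forall y z, e y z -> adj (f y) (f z))
  (f_lift : forall u z, adj u (f z) -> exists2 y, e y z & f y = u).
Variables (x : T) (d : U -> nat).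
Hypotheses (d_root : d (f x) = 0)
  (d_edge : forall u z, adj u (f z) -> d (f z) <= (d u).+1)
  (d_parent : forall z, f z <> f x -> exists2 u, adj u (f z) & (d u).+1 = d (f z))
  (d_unique : forall u u' z, adj u (f z) -> adj u' (f z) ->
     (d u).+1 = d (f z) -> (d u').+1 = d (f z) -> u = u').

Lemma geodesic_labelling_pullback : geodesic_labelling e x (d \o f).
Proof.
split=> //= [y z /f_edge/d_edge //|z z_x|y y' z e_yz e_y'z dy dy'].
  have [|u /f_lift[y e_yz <-] du] := d_parent (z := z); last by exists y.
  by move/f_inj/eqP; rewrite (negbTE z_x).
by apply: f_inj; apply: (d_unique (f_edge e_yz) (f_edge e_y'z)).
Qed.

End LabellingPullback.

(* A guarded sequence lists candidates with the condition under which each one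
   is present.  On an explicit sequence these predicates compute to plain
   propositions, which [lia] can decide even when the guards are symbolic. *)
Section GuardedSeq.
Variable A : Type.
Implicit Types (P : A -> Prop) (s : seq (bool * A)).

Fixpoint ghas P s : Prop :=
  if s is (b, a) :: s' then (b /\ P a) \/ ghas P s' else False.

Fixpoint gall P s : Prop :=
  if s is (b, a) :: s' then (b -> P a) /\ gall P s' else True.

Fixpoint gat_most_one P s : Prop :=
  if s is (b, a) :: s' then (b /\ P a -> ~ ghas P s') /\ gat_most_one P s' else True.

Definition gmem (a : A) s : Prop := ghas (eq^~ a) s.

Lemma ghasP P s : ghas P s -> exists2 a, gmem a s & P a.
Proof.
elim: s => [|[b a] s IHs] //= [[b_ Pa]|/IHs[c c_s Pc]]; first by exists a; first left.
by exists c; first right.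
Qed.

Lemma gmem_ghas P s a : gmem a s -> P a -> ghas P s.
Proof. by elim: s => [|[b c] s IHs] //= [[b_ <-]|/IHs]; [left | right; auto]. Qed.

Lemma gallP P s a : gall P s -> gmem a s -> P a.
Proof. by elim: s => [|[b c] s IHs] //= [Pc /IHs all_s] [[/Pc Pc' <-]|/all_s]. Qed.

Lemma gat_most_oneP P s a a' :
  gat_most_one P s -> gmem a s -> gmem a' s -> P a -> P a' -> a = a'.
Proof.
elim: s => [|[b c] s IHs] //= [excl /IHs {}IHs] [[b_ <-]|a_s] [[b' <-]|a'_s] Pa Pa' //.
- by case: (excl (conj b_ Pa)); apply: gmem_ghas Pa'.
- by case: (excl (conj b' Pa')); apply: gmem_ghas Pa.
- exact: IHs.
Qed.

End GuardedSeq.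

(* Symbolic vertices of F_(2m+1): [Ul t] and [Ur t] are the two vertices of the
   u-cycle at distance t from its middle vertex [Um] = u_(m+1), so that [Ul m]
   is u_1 and [Ur m] is u_k, and similarly on the v-cycle; the paths of length
   three are s1-W0-W1-t1, s1-W2-W3-t2, s2-W4-W5-t1 and s2-W6-W7-t2.  [enc] is
   the numbering of [Fk_vertex]. *)
Inductive vtx := Um | Ul of nat | Ur of nat | Vm | Vl of nat | Vr of nat
  | B | S1 | S2 | T1 | T2 | W0 | W1 | W2 | W3 | W4 | W5 | W6 | W7.

Section Model.
Variable m : nat.
Local Notation k := (2 * m + 1).

Definition valid (v : vtx) : bool :=
  match v with Ul t | Ur t | Vl t | Vr t => 0 < t <= m | _ => true end.

Definition enc (v : vtx) : nat :=
  match v with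
  | Ul t => m - t | Um => m | Ur t => m + t
  | Vl t => 3 * m + 1 - t | Vm => 3 * m + 1 | Vr t => 3 * m + 1 + t
  | B => 4 * m + 2 | S1 => 4 * m + 3 | S2 => 4 * m + 4 | T1 => 4 * m + 5
  | T2 => 4 * m + 6 | W0 => 4 * m + 7 | W1 => 4 * m + 8 | W2 => 4 * m + 9
  | W3 => 4 * m + 10 | W4 => 4 * m + 11 | W5 => 4 * m + 12 | W6 => 4 * m + 13
  | W7 => 4 * m + 14
  end.

Definition dec (n : nat) : vtx :=
  if n < m then Ul (m - n) else if n == m then Um else if n < k then Ur (n - m)
  else if n < 3 * m + 1 then Vl (3 * m + 1 - n) else if n == 3 * m + 1 then Vm
  else if n < 4 * m + 2 then Vr (n - (3 * m + 1))
  else if n == 4 * m + 2 then B else if n == 4 * m + 3 then S1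
  else if n == 4 * m + 4 then S2 else if n == 4 * m + 5 then T1
  else if n == 4 * m + 6 then T2 else if n == 4 * m + 7 then W0
  else if n == 4 * m + 8 then W1 else if n == 4 * m + 9 then W2
  else if n == 4 * m + 10 then W3 else if n == 4 * m + 11 then W4
  else if n == 4 * m + 12 then W5 else if n == 4 * m + 13 then W6 else W7.

Definition nb (z : vtx) : seq (bool * vtx) :=
  match z with
  | Um => [:: (true, Ul 1); (true, Ur 1); (true, B)]
  | Ul t => [:: (t == 1, Um); (1 < t, Ul t.-1); (t < m, Ul t.+1); (t == m, Ur m); (t == m, S1)]
  | Ur t => [:: (t == 1, Um); (1 < t, Ur t.-1); (t < m, Ur t.+1); (t == m, Ul m); (t == m, S2)]
  | Vm => [:: (true, Vl 1); (true, Vr 1); (true, B)]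
  | Vl t => [:: (t == 1, Vm); (1 < t, Vl t.-1); (t < m, Vl t.+1); (t == m, Vr m); (t == m, T1)]
  | Vr t => [:: (t == 1, Vm); (1 < t, Vr t.-1); (t < m, Vr t.+1); (t == m, Vl m); (t == m, T2)]
  | B => [:: (true, Um); (true, Vm)]
  | S1 => [:: (true, Ul m); (true, W0); (true, W2)]
  | S2 => [:: (true, Ur m); (true, W4); (true, W6)]
  | T1 => [:: (true, Vl m); (true, W1); (true, W5)]
  | T2 => [:: (true, Vr m); (true, W3); (true, W7)]
  | W0 => [:: (true, S1); (true, W1)]
  | W1 => [:: (true, W0); (true, T1)]
  | W2 => [:: (true, S1); (true, W3)]
  | W3 => [:: (true, W2); (true, T2)]
  | W4 => [:: (true, S2); (true, W5)]
  | W5 => [:: (true, W4); (true, T1)]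
  | W6 => [:: (true, S2); (true, W7)]
  | W7 => [:: (true, W6); (true, T2)]
  end.

Definition nbr (y z : vtx) : Prop := gmem y (nb z).

Lemma enc_lt v : valid v -> enc v < 4 * m + 15.
Proof. by case: v => //= *; lia. Qed.

Lemma dec_enc v : valid v -> dec (enc v) = v.
Proof.
rewrite /dec; case: v => [|t|t||t|t|||||||||||||] /= v_valid;
  repeat case: ifP => ?; first [reflexivity | exfalso; lia | f_equal; lia].
Qed.

Lemma dec_valid n : valid (dec n).
Proof. by rewrite /dec; repeat case: ifP => ? //=; lia. Qed.

Lemma enc_dec n : n < 4 * m + 15 -> enc (dec n) = n.
Proof. by rewrite /dec => ?; repeat case: ifP => ? /=; lia. Qed.

Lemma nb_valid z : 0 < m -> valid z -> gall valid (nb z).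
Proof. by move=> ?; case: z => //= *; repeat split => // *; lia. Qed.

End Model.

Lemma cycle_succE n a c : (a < n) && (c == a.+1 %% n) =
  (a.+1 == n) && (c == 0) || (a.+1 < n) && (c == a.+1).
Proof.
case: (ltngtP a.+1 n) => [lt_an|gt_an|<-].
- by rewrite modn_small //; lia.
- by move: (a.+1 %% n) => r; lia.
- by rewrite modnn; lia.
Qed.

Lemma shifted_cycle_succE n a c : (n <= a < 2 * n) && (c == n + (a - n).+1 %% n) =
  (a.+1 == 2 * n) && (c == n) || [&& n <= a, a.+1 < 2 * n & c == a.+1].
Proof.
case: (leqP n a) => [le_na|lt_an]; last by rewrite /=; lia.
case: (ltngtP (a - n).+1 n) => [lt_an|gt_an|eq_an].
- by rewrite modn_small //; lia.
- by move: ((a - n).+1 %% n) => r; lia.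
- by rewrite eq_an modnn; lia.
Qed.

Section Adjacency.
Variable m : nat.
Local Notation k := (2 * m + 1).

Definition vtx_of (v : Fk_vertex k) : vtx := dec m (val v).

Lemma enc_vtx_of v : enc m (vtx_of v) = val v.
Proof. by apply: enc_dec; have : val v < 2 * k + 13 := ltn_ord v; lia. Qed.

Lemma valid_vtx_of v : valid m (vtx_of v).
Proof. exact: dec_valid. Qed.

Lemma vtx_of_inj : injective vtx_of.
Proof. by move=> y z yz; apply: val_inj; rewrite -enc_vtx_of yz enc_vtx_of. Qed.

Lemma vtx_of_onto y : valid m y -> exists v, vtx_of v = y.
Proof.
move=> y_valid; have lt_y : enc m y < 2 * k + 13 by have := enc_lt y_valid; lia.
by exists (Ordinal lt_y); rewrite /vtx_of dec_enc.
Qed.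

Lemma Fmid_odd : Fmid k = m.
Proof. by rewrite /Fmid -addnA -mulnSr mulKn. Qed.

Hypothesis m_gt0 : 0 < m.

Ltac unfold_Fdedge := rewrite /Fdedge Fmid_odd /Fu /Fv /Fb /Fs1 /Fs2 /Ft1 /Ft2 /Fw
  !cycle_succE !shifted_cycle_succE.

Lemma edge_nbr z a : valid m z -> Fdedge k a (enc m z) || Fdedge k (enc m z) a ->
  ghas (fun y => enc m y = a) (nb m z).
Proof.
case: z => /= [|t|t||t|t|||||||||||||]; unfold_Fdedge; intros;
  repeat match goal with
  | H : is_true (_ || _) |- _ => case/orP: H => H
  | H : is_true (_ && _) |- _ => case/andP: H => ? H
  end; first [exfalso; lia | lia].
Qed.

Ltac solve_orb := lazymatch goal with
  | |- is_true (_ || _) => apply/orP; first [left; solve_orb | right; solve_orb]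
  | |- _ => lia
  end.

Lemma nbr_edge z : valid m z ->
  gall (fun y => Fdedge k (enc m y) (enc m z) || Fdedge k (enc m z) (enc m y)) (nb m z).
Proof.
case: z => /= [|t|t||t|t|||||||||||||]; unfold_Fdedge; intros;
  repeat split => *; solve_orb.
Qed.

Lemma Fk_adj_nbr y z : Fk_adj k y z <-> nbr m (vtx_of y) (vtx_of z).
Proof.
have z_valid := valid_vtx_of z.
have := nbr_edge z_valid; have := @edge_nbr _ (val y) z_valid.
rewrite -/(vtx_of z) enc_vtx_of => to_nbr to_edge; split.
  move=> /to_nbr/ghasP[w w_nb w_y]; suff -> : vtx_of y = w by [].
  by rewrite /vtx_of -w_y dec_enc // (gallP (nb_valid m_gt0 z_valid) w_nb).
by move=> /(gallP to_edge); rewrite enc_vtx_of.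
Qed.

End Adjacency.

Definition flip_u (v : vtx) : vtx :=
  match v with
  | Ul t => Ur t | Ur t => Ul t | S1 => S2 | S2 => S1
  | W0 => W4 | W4 => W0 | W1 => W5 | W5 => W1
  | W2 => W6 | W6 => W2 | W3 => W7 | W7 => W3
  | _ => v
  end.

Definition flip_v (v : vtx) : vtx :=
  match v with
  | Vl t => Vr t | Vr t => Vl t | T1 => T2 | T2 => T1
  | W0 => W2 | W2 => W0 | W1 => W3 | W3 => W1
  | W4 => W6 | W6 => W4 | W5 => W7 | W7 => W5
  | _ => v
  end.

Definition swap_uv (v : vtx) : vtx :=
  match v with
  | Um => Vm | Vm => Um | Ul t => Vl t | Vl t => Ul t | Ur t => Vr t | Vr t => Ur t
  | S1 => T1 | T1 => S1 | S2 => T2 | T2 => S2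
  | W0 => W1 | W1 => W0 | W2 => W5 | W5 => W2
  | W3 => W4 | W4 => W3 | W6 => W7 | W7 => W6
  | B => B
  end.

Section Automorphisms.
Variable m : nat.

Definition automorphism (g : vtx -> vtx) : Prop :=
  [/\ injective g,
      forall v, valid m v -> valid m (g v),
      forall y z, nbr m y z -> nbr m (g y) (g z)
    & forall u z, nbr m u (g z) -> exists2 y, nbr m y z & g y = u].

Lemma automorphism_id : automorphism id.
Proof. by split=> // u z; exists u. Qed.

Lemma automorphism_comp g h : automorphism g -> automorphism h -> automorphism (g \o h).
Proof.
case=> g_inj g_valid g_nbr g_lift [h_inj h_valid h_nbr h_lift]; split=> /=.
- exact: inj_comp.
- by move=> v /h_valid/g_valid.
- by move=> y z /h_nbr/g_nbr.
by move=> u z /g_lift[w /h_lift[y y_z <-] <-]; exists y.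
Qed.

Lemma automorphism_involution g : involutive g ->
  (forall v, valid m v -> valid m (g v)) ->
  (forall z, gall (fun y => nbr m (g y) (g z)) (nb m z)) -> automorphism g.
Proof.
move=> gK g_valid g_nb; have g_nbr y z : nbr m y z -> nbr m (g y) (g z).
  exact: gallP (g_nb z).
split=> // [|u z /g_nbr]; first exact: inv_inj.
by rewrite gK => u_z; exists (g u).
Qed.

Ltac pick_nbr :=
  repeat split; intros; repeat first [left; split; [done | reflexivity] | right].

Lemma automorphism_flip_u : automorphism flip_u.
Proof. by apply: automorphism_involution => [[]|[]|[]] //= *; pick_nbr. Qed.

Lemma automorphism_flip_v : automorphism flip_v.
Proof. by apply: automorphism_involution => [[]|[]|[]] //= *; pick_nbr. Qed.

Lemma automorphism_swap_uv : automorphism swap_uv.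
Proof. by apply: automorphism_involution => [[]|[]|[]] //= *; pick_nbr. Qed.

End Automorphisms.

Definition is_rep (v : vtx) : bool :=
  match v with Um | Ul _ | B | S1 | W0 => true | _ => false end.

Definition to_rep (x : vtx) : vtx -> vtx :=
  match x with
  | Um | Ul _ | B | S1 | W0 => id
  | Ur _ | S2 | W4 => flip_u
  | W2 => flip_v
  | W6 => flip_u \o flip_v
  | Vm | Vl _ | T1 | W1 => swap_uv
  | Vr _ | T2 => swap_uv \o flip_v
  | W3 => flip_u \o swap_uv
  | W5 => flip_v \o swap_uv
  | W7 => flip_u \o flip_v \o swap_uv
  end.

Lemma is_rep_to_rep x : is_rep (to_rep x x).
Proof. by case: x. Qed.

Lemma automorphism_to_rep m x : automorphism m (to_rep x).
Proof.
have := automorphism_flip_u m; have := automorphism_flip_v m.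
have := automorphism_swap_uv m; have := automorphism_id m.
by case: x => * /=; repeat apply: automorphism_comp.
Qed.

Definition rep_dist (m : nat) (r z : vtx) : nat :=
  match r with
  | Um => match z with
    | Um => 0 | Ul u | Ur u => u | Vm => 2 | Vl u | Vr u => u + 2 | B => 1
    | S1 | S2 => m + 1 | T1 | T2 => m + 3
    | W0 | W2 | W4 | W6 => m + 2 | W1 | W3 | W5 | W7 => m + 3
    end
  | Ul t => match z with
    | Um => t | Ul u => maxn t u - minn t u | Ur u => minn (t + u) (2 * m + 1 - (t + u))
    | Vm => t + 2 | Vl u | Vr u => minn (2 * m + 5 - (t + u)) (t + u + 2) | B => t + 1
    | S1 => m + 1 - t | S2 => m + 2 - t | T1 | T2 => m + 4 - t
    | W0 | W2 => m + 2 - t | W1 | W3 | W4 | W6 => m + 3 - t | W5 | W7 => m + 4 - t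
    end
  | B => match z with
    | Um | Vm => 1 | Ul u | Ur u | Vl u | Vr u => u + 1 | B => 0
    | S1 | S2 | T1 | T2 => m + 2 | _ => m + 3
    end
  | S1 => match z with
    | Um => m + 1 | Ul u => m + 1 - u | Ur u => m + 2 - u
    | Vm => m + 3 | Vl u | Vr u => m + 4 - u | B => m + 2
    | S1 => 0 | S2 | T1 | T2 => 3 | W0 | W2 => 1 | W1 | W3 => 2 | _ => 4
    end
  | W0 => match z with
    | Um => m + 2 | Ul u => m + 2 - u | Ur u => m + 3 - u
    | Vm => m + 3 | Vl u => m + 3 - u | Vr u => m + 4 - u | B => m + 3
    | S1 => 1 | S2 => 4 | T1 => 2 | T2 => 4
    | W0 => 0 | W1 => 1 | W2 => 2 | W3 | W5 => 3 | W4 => 4 | W6 | W7 => 5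
    end
  | _ => 0
  end.

Section RepresentativeDistances.
Variables (m : nat) (r : vtx).
Hypotheses (m_gt0 : 0 < m) (r_rep : is_rep r) (r_valid : valid m r).

Lemma rep_dist_refl : rep_dist m r r = 0.
Proof. by case: r r_rep => //= t; rewrite maxnn minnn subnn. Qed.

Lemma rep_dist_edge z : valid m z ->
  gall (fun y => rep_dist m r z <= (rep_dist m r y).+1) (nb m z).
Proof.
move: z; case: r r_rep r_valid => //= [|t|||] _ ? [] //=.
all: by move=> *; repeat split => *; lia.
Qed.

Ltac case_guards := repeat match goal with |- context [?a == ?b] => case: (a =P b) => ? end.

Ltac case_minmax := repeat match goal with
  | |- context [minn ?a ?b] => case: (leqP a b) => ?
  | |- context [maxn ?a ?b] => case: (leqP a b) => ?
  end.

Ltac pick_candidate := solve [repeat first [left; split; lia | right]].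

Lemma rep_dist_parent z : valid m z -> z <> r ->
  ghas (fun y => (rep_dist m r y).+1 = rep_dist m r z) (nb m z).
Proof.
move=> z_valid z_r; have : enc m z != enc m r.
  by apply: contra_not_neq z_r => /(congr1 (dec m)); rewrite !dec_enc.
move: z z_valid {z_r}; case: r r_rep r_valid => //= [|t|||] _ ? [] //=.
(* Splitting on the guards and on the branches of [minn]/[maxn] first leaves
   goals in which a single candidate is the parent, which keeps [lia] fast. *)
all: move=> *; case_guards.
all: first [pick_candidate | case_minmax; first [pick_candidate | exfalso; lia]].
Qed.

Lemma rep_dist_unique z : valid m z ->
  gat_most_one (fun y => (rep_dist m r y).+1 = rep_dist m r z) (nb m z).
Proof.
move: z; case: r r_rep r_valid => //= [|t|||] _ ? [] //=.
all: by move=> *; repeat split => *; lia.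
Qed.

End RepresentativeDistances.

Section FkLabelling.
Variable m : nat.
Hypothesis m_gt0 : 0 < m.
Local Notation k := (2 * m + 1).

Lemma Fk_labelling (x : Fk_vertex k) :
  let g := to_rep (vtx_of x) in
  geodesic_labelling (Fk_adj k) x (rep_dist m (g (vtx_of x)) \o (g \o @vtx_of m)).
Proof.
move=> g; have [g_inj g_valid g_nbr g_lift] : automorphism m g by exact: automorphism_to_rep.
have f_valid (v : Fk_vertex k) : valid m (g (vtx_of v)) by apply/g_valid/valid_vtx_of.
have r_rep : is_rep (g (vtx_of x)) by exact: is_rep_to_rep.
have r_valid := f_valid x.
apply: (geodesic_labelling_pullback (adj := nbr m)) => [|y z|u z||u z|z|u u' z].
- exact: inj_comp g_inj (@vtx_of_inj m).
- by move/(Fk_adj_nbr m_gt0)/g_nbr.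
- move=> /g_lift[y0 y0_z <-].
  have [y y_y0] := vtx_of_onto (gallP (nb_valid m_gt0 (valid_vtx_of z)) y0_z).
  by exists y; [apply/(Fk_adj_nbr m_gt0); rewrite y_y0 | rewrite /= y_y0].
- exact: rep_dist_refl.
- exact: gallP (rep_dist_edge m_gt0 r_rep r_valid (f_valid z)).
- by move/(rep_dist_parent m_gt0 r_rep r_valid (f_valid z))/ghasP => [u]; exists u.
- exact: gat_most_oneP (rep_dist_unique m_gt0 r_rep r_valid (f_valid z)).
Qed.

End FkLabelling.

Theorem proposition4 (k : nat) : odd k -> 3 <= k -> geodetic (Fk_adj k).
Proof.
move=> k_odd k_ge3; have [m -> m_gt0] : exists2 m, k = 2 * m + 1 & 0 < m.
  by exists k./2; move: (odd_double_half k); rewrite k_odd -muln2 /=; lia.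
by apply: geodetic_of_labellings => x; eexists; apply: Fk_labelling.
Qed.
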